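(* Let $\mathscr{C}$ be a graph category. Then $\mathscr{C}$ is group-theoretical if and only if there exists a set $S$ of bilabelled graphs such that for every $(K,\mathbf{a},\mathbf{b})\in S$ every vertex of $K$ occurs among the entries of $\mathbf{a}$ or $\mathbf{b}$, and $\mathscr{C}$ is the graph category generated by $S\cup\{\mathbf{P}_{\mathrm{gt}}\}$.
   Context: Graphs are finite, undirected, without multiple edges, loops allowed, considered up to isomorphism; $N_k$ is the edgeless graph on $k$ vertices. Bilabelled graph: $(K,\mathbf{a},\mathbf{b})$ with $K$ a graph, $\mathbf{a}\in V(K)^k$ (inputs), $\mathbf{b}\in V(K)^l$ (outputs), up to isomorphism of $K$ preserving the tuples. Operations: tensor product $(K,\mathbf{a},\mathbf{b})\otimes(H,\mathbf{c},\mathbf{d})=(K\sqcup H,\mathbf{a}\mathbf{c},\mathbf{b}\mathbf{d})$; composition (for $|\mathbf{b}|=|\mathbf{c}|$) $(H,\mathbf{c},\mathbf{d})\cdot(K,\mathbf{a},\mathbf{b})=(H\cdot K,\mathbf{a},\mathbf{d})$ where $H\cdot K$ is obtained from $K\sqcup H$ by identifying $b_i$ with $c_i$ for all $i$ (ignoring edge multiplicities); involution $(K,\mathbf{a},\mathbf{b})^*=(K,\mathbf{b},\mathbf{a})$. For a partition $\pi$ of $V(K)$, $K/\pi$ has the blocks as vertices with an edge between two (possibly equal) blocks iff $K$ has an edge between some of their elements, $q_\pi$ the quotient map, and $(K,\mathbf{a},\mathbf{b})/\pi:=(K/\pi,q_\pi(\mathbf{a}),q_\pi(\mathbf{b}))$.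 Let $\mathbf{0}=(N_0,\emptyset,\emptyset)$ and $\mathbf{M}^{k,l}=(M,(v,\dots,v),(v,\dots,v))$ for the one-vertex loopless graph $M$ with vertex $v$ ($k$ inputs, $l$ outputs). A graph category is a set of bilabelled graphs containing $\mathbf{M}^{1,1},\mathbf{M}^{0,2},\mathbf{0}$ and closed under tensor products, compositions and involution; it is group-theoretical if it is also closed under all quotients $\mathbf{K}\mapsto\mathbf{K}/\pi$. $\mathbf{P}_{\mathrm{gt}}$ denotes the bilabelled graph $(N_2,(x,y,y),(y,y,x))$, where $N_2$ has the two vertices $x,y$ and no edges. *)

From mathcomp Require Import all_boot.
Set Implicit Arguments. Unset Strict Implicit. Unset Printing Implicit Defensive.

(* A concrete bilabelled graph: vertex set 'I_bn, adjacency relation badj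
   (only its symmetrisation [sedge] matters: graphs are undirected, loops
   allowed, no multiple edges), input tuple bin, output tuple bout. *)
Record bgraph := BG {
  bn : nat;
  badj : rel 'I_bn;
  bin : seq 'I_bn;
  bout : seq 'I_bn }.

Definition sedge (G : bgraph) (u v : 'I_(bn G)) : bool := badj u v || badj v u.

Definition biso (G H : bgraph) : Prop :=
  exists f : 'I_(bn G) -> 'I_(bn H),
    [/\ bijective f,
        (forall u v, sedge u v = sedge (f u) (f v)),
        map f (bin G) = bin H & map f (bout G) = bout H].

(* Quotient of a graph on 'I_n along a surjection q : 'I_n -> 'I_m
   (= partition of the vertex set with quotient map q), with given labels. *)
Definition quot_rel n m (adj : rel 'I_n) (q : 'I_n -> 'I_m) : rel 'I_m :=
  fun i j => [exists u, exists v, [&& q u == i, q v == j & adj u v]].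

Definition mkquot n m (adj : rel 'I_n) (q : 'I_n -> 'I_m) (a b : seq 'I_n)
  : bgraph := @BG m (quot_rel adj q) (map q a) (map q b).

Definition surj n m (q : 'I_n -> 'I_m) : Prop := forall j, exists i, q i = j.

Definition bquot (G : bgraph) m (q : 'I_(bn G) -> 'I_m) : bgraph :=
  mkquot (@badj G) q (bin G) (bout G).

Definition sum_rel n1 n2 (r1 : rel 'I_n1) (r2 : rel 'I_n2) : rel 'I_(n1 + n2) :=
  fun u v => match split u, split v with
             | inl a, inl b => r1 a b
             | inr a, inr b => r2 a b
             | _, _ => false
             end.

Definition btensor (K H : bgraph) : bgraph :=
  @BG (bn K + bn H) (sum_rel (@badj K) (@badj H))
      (map (@lshift _ _) (bin K) ++ map (@rshift _ _) (bin H))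
      (map (@lshift _ _) (bout K) ++ map (@rshift _ _) (bout H)).

Definition binv (K : bgraph) : bgraph := @BG (bn K) (@badj K) (bout K) (bin K).

Definition glue_rel (K H : bgraph) : rel 'I_(bn K + bn H) :=
  fun u v =>
    let z := zip (map (@lshift _ (bn H)) (bout K)) (map (@rshift (bn K) _) (bin H)) in
    ((u, v) \in z) || ((v, u) \in z).

(* Composition H . K (for |b| = |c|): the quotient of K |_| H by the
   equivalence relation generated by b_i ~ c_i (q is its quotient map),
   with inputs a (of K) and outputs d (of H). *)
Definition is_glue_map (K H : bgraph) m (q : 'I_(bn K + bn H) -> 'I_m) : Prop :=
  surj q /\ (forall u v, (q u == q v) = connect (@glue_rel K H) u v).

Definition bcomp (K H : bgraph) m (q : 'I_(bn K + bn H) -> 'I_m) : bgraph :=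
  mkquot (sum_rel (@badj K) (@badj H)) q
         (map (@lshift _ _) (bin K)) (map (@rshift _ _) (bout H)).

Definition bM (k l : nat) : bgraph :=
  @BG 1 (fun _ _ => false) (nseq k ord0) (nseq l ord0).
Definition b0 : bgraph := @BG 0 (fun _ _ => false) [::] [::].
Definition Pgt : bgraph :=
  @BG 2 (fun _ _ => false) [:: ord0; ord_max; ord_max] [:: ord_max; ord_max; ord0].

(* A set of bilabelled graphs (up to isomorphism) = an isomorphism-closed
   predicate on concrete representatives. *)
Definition iso_closed (C : bgraph -> Prop) : Prop :=
  forall G H, biso G H -> C G -> C H.

Definition graph_category (C : bgraph -> Prop) : Prop :=
  iso_closed C /\
  C (bM 1 1) /\ C (bM 0 2) /\ C b0 /\
  (forall K H, C K -> C H -> C (btensor K H)) /\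
  (forall K H m (q : 'I_(bn K + bn H) -> 'I_m),
     C K -> C H -> size (bout K) = size (bin H) -> is_glue_map q ->
     C (bcomp q)) /\
  (forall K, C K -> C (binv K)).

Definition group_theoretical (C : bgraph -> Prop) : Prop :=
  graph_category C /\
  (forall G m (q : 'I_(bn G) -> 'I_m), surj q -> C G -> C (bquot q)).

Definition generated (S : bgraph -> Prop) (G : bgraph) : Prop :=
  forall C, graph_category C -> (forall K, S K -> C K) -> C G.

From mathcomp Require Import all_boot.
Set Implicit Arguments. Unset Strict Implicit. Unset Printing Implicit Defensive.

(* Composing a graph K with an edgeless graph X all of whose vertices are inputs glues the
   outputs of K onto the vertices of X.  Inside any graph category this realises the quotients
   of K that only identify vertices joined through the gluing, and relabellings of outputs.
   With Pgt = (N_2, (x,y,y), (y,y,x)) a doubled label [v; v] can moreover be moved past any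
   other output, created at any labelled vertex, and transferred between inputs and outputs.

   A group-theoretical category contains Pgt (a quotient of M^{0,2} (x) M^{1,1} (x) M^{2,0}) and
   is closed under appending an output pair [v; v] at any vertex (a quotient of K (x) M^{0,2}).
   Every K in it is then obtained from a fully labelled member, K with [v; v] appended for each
   vertex v, by capping these pairs with M^{2,0}.

   Conversely, let C be generated by fully labelled graphs and Pgt.  The members of C that stay
   in C after appending an output pair at any vertex form a graph category containing the
   generators, so C is closed under appending output pairs.  The quotient K / pi is then built by
   labelling every vertex v of K twice and gluing this pair to the vertex pi(v) of an edgeless
   graph. *)

Lemma split_lshift m n (u : 'I_m) : split (lshift n u) = inl u.
Proof. exact: (unsplitK (inl u)). Qed.

Lemma split_rshift m n (w : 'I_n) : split (rshift m w) = inr w.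
Proof. exact: (unsplitK (inr w)). Qed.

Definition split_case (T : Type) m n (f : 'I_m -> T) (g : 'I_n -> T) (x : 'I_(m + n)) : T :=
  match split x with inl u => f u | inr w => g w end.

Section SplitCase.
Variables (T : Type) (m n : nat) (f : 'I_m -> T) (g : 'I_n -> T).

Lemma split_case_l u : split_case f g (lshift n u) = f u.
Proof. by rewrite /split_case split_lshift. Qed.

Lemma split_case_r w : split_case f g (rshift m w) = g w.
Proof. by rewrite /split_case split_rshift. Qed.

Lemma map_split_case_l (s : seq 'I_m) : map (split_case f g) (map (lshift n) s) = map f s.
Proof. by rewrite -map_comp; apply: eq_map => u; apply: split_case_l. Qed.

Lemma map_split_case_r (s : seq 'I_n) : map (split_case f g) (map (@rshift m n) s) = map g s.
Proof. by rewrite -map_comp; apply: eq_map => w; apply: split_case_r. Qed.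

End SplitCase.

Lemma enum_ord_add m n :
  enum 'I_(m + n) = map (lshift n) (enum 'I_m) ++ map (@rshift m n) (enum 'I_n).
Proof.
apply: (inj_map val_inj); rewrite val_enum_ord iotaD add0n map_cat.
rewrite -(map_comp val (lshift n)) -(map_comp val (@rshift m n)).
rewrite (eq_map (_ : val \o lshift n =1 val)) // val_enum_ord.
by rewrite (eq_map (_ : val \o @rshift m n =1 addn m \o val)) // map_comp val_enum_ord -iotaDl addn0.
Qed.

Lemma zip_map2 (S T S' T' : Type) (f : S -> S') (g : T -> T') s t :
  zip (map f s) (map g t) = map (fun p => (f p.1, g p.2)) (zip s t).
Proof. by elim: s t => [|x s IH] [|y t] //=; rewrite IH. Qed.

Lemma mem_zip_eq_map (S T : eqType) (R : Type) (f : S -> R) (g : T -> R) s t a b :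
  map f s = map g t -> (a, b) \in zip s t -> f a = g b.
Proof.
elim: s t => [|x s IH] [|y t] //= [fg_xy fg_st].
by rewrite in_cons => /orP [/eqP [-> ->] // | /(IH _ fg_st)].
Qed.

Lemma exists_mem_zip_l (S T : eqType) (s : seq S) (t : seq T) b :
  size s = size t -> b \in t -> exists a, (a, b) \in zip s t.
Proof.
elim: s t => [|x s IH] [|y t] //= [st]; rewrite in_cons => /orP [/eqP ->|/(IH _ st) [a ab]].
  by exists x; rewrite mem_head.
by exists a; rewrite in_cons ab orbT.
Qed.

Lemma mem_zip_nseq (S T : eqType) (s : seq S) (y : T) x :
  x \in s -> (x, y) \in zip s (nseq (size s) y).
Proof. by elim: s => //= z s IH; rewrite !in_cons => /orP [/eqP ->|/IH ->]; rewrite ?eqxx ?orbT. Qed.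

Lemma mem_zip_graph (S T : eqType) (f : S -> T) s x : x \in s -> (x, f x) \in zip s (map f s).
Proof. by elim: s => //= y s IH; rewrite !in_cons => /orP [/eqP ->|/IH ->]; rewrite ?eqxx ?orbT. Qed.

Lemma mem_zip_catr (S T : eqType) (s1 s2 : seq S) (t1 t2 : seq T) p :
  size s1 = size t1 -> p \in zip s2 t2 -> p \in zip (s1 ++ s2) (t1 ++ t2).
Proof. by move=> st p_in; rewrite zip_cat // mem_cat p_in orbT. Qed.

Fixpoint stutter (T : Type) (s : seq T) : seq T :=
  if s is x :: s' then [:: x, x & stutter s'] else [::].

Lemma stutter_rcons (T : Type) (s : seq T) x : stutter (rcons s x) = stutter s ++ [:: x; x].
Proof. by elim: s => //= y s ->. Qed.

Lemma mem_stutter (T : eqType) (s : seq T) : stutter s =i s.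
Proof. by elim: s => //= y s IH x; rewrite !in_cons IH orbA orbb. Qed.

Lemma map_stutter (T U : Type) (f : T -> U) s : map f (stutter s) = stutter (map f s).
Proof. by elim: s => //= y s ->. Qed.

Lemma zip_stutter (S T : Type) (s : seq S) (t : seq T) :
  zip (stutter s) (stutter t) = stutter (zip s t).
Proof. by elim: s t => [|x s IH] [|y t] //=; rewrite IH. Qed.

Definition edgeless (G : bgraph) : Prop := forall u v, @badj G u v = false.
Definition all_inputs (G : bgraph) : Prop := forall v : 'I_(bn G), v \in bin G.

Definition bN n (a b : seq 'I_n) : bgraph := @BG n (fun _ _ => false) a b.
Definition bId p : bgraph := bN (enum 'I_p) (enum 'I_p).

Definition add_out_pair (G : bgraph) (v : 'I_(bn G)) : bgraph :=
  BG (@badj G) (bin G) (bout G ++ [:: v; v]).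
Definition add_in_pair (G : bgraph) (v : 'I_(bn G)) : bgraph :=
  BG (@badj G) (bin G ++ [:: v; v]) (bout G).

Definition fully_labelled (K : bgraph) : Prop := forall v : 'I_(bn K), v \in bin K ++ bout K.

Definition pair_closed (C : bgraph -> Prop) : Prop :=
  forall G (v : 'I_(bn G)), C G -> C (add_out_pair v).

Lemma sum_rel_edgeless n1 n2 (r1 : rel 'I_n1) (r2 : rel 'I_n2) :
  (forall u v, r1 u v = false) -> (forall u v, r2 u v = false) ->
  forall u v, sum_rel r1 r2 u v = false.
Proof. by move=> r1F r2F u v; rewrite /sum_rel; case: split => a; case: split. Qed.

Lemma edgeless_btensor K H : edgeless K -> edgeless H -> edgeless (btensor K H).
Proof. exact: sum_rel_edgeless. Qed.

Lemma all_inputs_btensor K H : all_inputs K -> all_inputs H -> all_inputs (btensor K H).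
Proof.
move=> inK inH x; rewrite mem_cat.
case: (split_ordP x) => u ->.
  by rewrite (mem_map (@lshift_inj _ _)) inK.
by rewrite (mem_map (@rshift_inj _ _)) inH orbT.
Qed.

Lemma all_inputs_bId p : all_inputs (bId p).
Proof. by move=> v; rewrite mem_enum. Qed.

Lemma quot_rel_id n (r : rel 'I_n) : quot_rel r id =2 r.
Proof.
move=> i j; apply/existsP/idP => [[u /existsP [v /and3P [/eqP <- /eqP <-]]] //|rij].
by exists i; apply/existsP; exists j; rewrite !eqxx rij.
Qed.

Lemma quot_rel_edgeless n m (r : rel 'I_n) (q : 'I_n -> 'I_m) :
  (forall u v, r u v = false) -> forall i j, quot_rel r q i j = false.
Proof. by move=> rF i j; apply/existsP => -[u /existsP [v /and3P [_ _]]]; rewrite rF. Qed.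

Lemma quot_rel_sum_edgeless n1 n2 m (r1 : rel 'I_n1) (r2 : rel 'I_n2)
    (q : 'I_n1 -> 'I_m) (g : 'I_n2 -> 'I_m) :
  (forall u v, r2 u v = false) -> quot_rel (sum_rel r1 r2) (split_case q g) =2 quot_rel r1 q.
Proof.
move=> r2F i j; apply/existsP/existsP => -[x /existsP [y /and3P [qx qy rxy]]].
  move: qx qy rxy; rewrite /sum_rel.
  case: (split_ordP x) => u ->; case: (split_ordP y) => v ->; rewrite ?split_lshift ?split_rshift ?r2F //.
  rewrite !split_case_l => qx qy ruv.
  by exists u; apply/existsP; exists v; rewrite qx qy.
exists (lshift n2 x); apply/existsP; exists (lshift n2 y).
by rewrite /sum_rel !split_lshift !split_case_l qx qy.
Qed.

Lemma iso_closed_BG (C : bgraph -> Prop) n (r r' : rel 'I_n) a a' b b' :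
  iso_closed C -> r =2 r' -> a = a' -> b = b' -> C (BG r a b) -> C (BG r' a' b').
Proof.
move=> isoC rr' <- <-; apply: isoC; exists id; split; rewrite ?map_id //.
  by exists id.
by move=> u v; rewrite /sedge /= !rr'.
Qed.

Section GraphCategoryAxioms.
Variable C : bgraph -> Prop.
Hypothesis gcC : graph_category C.

Lemma gc_iso : iso_closed C. Proof. by case: gcC. Qed.
Lemma gc_bM11 : C (bM 1 1). Proof. by case: gcC => _ []. Qed.
Lemma gc_bM02 : C (bM 0 2). Proof. by case: gcC => _ [_ []]. Qed.
Lemma gc_b0 : C b0. Proof. by case: gcC => _ [_ [_ []]]. Qed.
Lemma gc_tensor K H : C K -> C H -> C (btensor K H).
Proof. by case: gcC => _ [_ [_ [_ [tensC _]]]]; apply: tensC. Qed.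
Lemma gc_comp K H m (q : 'I_(bn K + bn H) -> 'I_m) :
  C K -> C H -> size (bout K) = size (bin H) -> is_glue_map q -> C (bcomp q).
Proof. by case: gcC => _ [_ [_ [_ [_ [compC _]]]]]; apply: compC. Qed.
Lemma gc_inv K : C K -> C (binv K).
Proof. by case: gcC => _ [_ [_ [_ [_ [_ invC]]]]]; apply: invC. Qed.

End GraphCategoryAxioms.

Local Notation glued K X := (connect (@glue_rel K X)).

Lemma glue_rel_sym K H : symmetric (@glue_rel K H).
Proof. by move=> x y; rewrite /glue_rel orbC. Qed.

Lemma glue_rel_lr K H u h : (u, h) \in zip (bout K) (bin H) ->
  @glue_rel K H (lshift _ u) (rshift _ h).
Proof. by move=> uh; rewrite /glue_rel zip_map2; apply/orP; left; apply/mapP; exists (u, h). Qed.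

Lemma connect_glue_sym K H : connect_sym (@glue_rel K H).
Proof. exact/sym_connect_sym/glue_rel_sym. Qed.

Section EdgelessComposition.
Variables (K X : bgraph) (m : nat) (psi : 'I_(bn K) -> 'I_m) (g : 'I_(bn X) -> 'I_m).
Hypotheses (inX : all_inputs X) (psi_surj : surj psi)
  (labels_match : map g (bin X) = map psi (bout K))
  (psi_glued : forall u u', psi u = psi u' -> glued K X (lshift _ u) (lshift _ u')).

Local Notation phi := (split_case psi g).

Lemma size_glued_labels : size (bout K) = size (bin X).
Proof. by rewrite -(size_map psi) -labels_match size_map. Qed.

Lemma glue_rel_phi x y : glue_rel x y -> phi x = phi y.
Proof.
have phi_pair a b : (a, b) \in zip (map (lshift (bn X)) (bout K)) (map (@rshift (bn K) _) (bin X)) ->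
    phi a = phi b.
  rewrite zip_map2 => /mapP [[u h] uh [-> ->]] /=.
  by rewrite split_case_l split_case_r; apply: mem_zip_eq_map (esym labels_match) uh.
by case/orP => /phi_pair.
Qed.

Lemma glued_rep x : exists2 u, psi u = phi x & glued K X x (lshift _ u).
Proof.
case: (split_ordP x) => [u ->|h ->]; first by exists u; rewrite ?split_case_l.
have [u uh] := exists_mem_zip_l size_glued_labels (inX h).
exists u; first by rewrite split_case_r; apply: mem_zip_eq_map (esym labels_match) uh.
by apply: connect1; rewrite glue_rel_sym; apply: glue_rel_lr.
Qed.

Lemma is_glue_map_split_case : is_glue_map phi.
Proof.
split=> [j|x y].
  by have [u <-] := psi_surj j; exists (lshift _ u); rewrite split_case_l.
apply/eqP/idP => [phi_xy|].
  have [u psi_u glued_x] := glued_rep x; have [u' psi_u' glued_y] := glued_rep y.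
  rewrite connect_glue_sym in glued_y.
  apply: connect_trans glued_x (connect_trans _ glued_y).
  by apply: psi_glued; rewrite psi_u psi_u'.
have closed_phi : closed (@glue_rel K X) [pred z | phi z == phi x].
  by move=> z z' /glue_rel_phi; rewrite !inE => ->.
by move=> /(closed_connect closed_phi); rewrite !inE eqxx => /esym/eqP.
Qed.

End EdgelessComposition.

Lemma all_inputs_bM k l : all_inputs (bM k.+1 l).
Proof. by move=> v; rewrite ord1 mem_head. Qed.

Section GraphCategory.
Variable C : bgraph -> Prop.
Hypothesis gcC : graph_category C.

Lemma gc_comp_edgeless K X m (psi : 'I_(bn K) -> 'I_m) (g : 'I_(bn X) -> 'I_m) :
  C K -> C X -> edgeless X -> all_inputs X -> surj psi ->
  map g (bin X) = map psi (bout K) ->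
  (forall u u', psi u = psi u' -> glued K X (lshift _ u) (lshift _ u')) ->
  C (@BG m (quot_rel (@badj K) psi) (map psi (bin K)) (map g (bout X))).
Proof.
move=> CK CX noX inX psi_surj labels_match psi_glued.
have := gc_comp gcC CK CX (size_glued_labels labels_match)
  (is_glue_map_split_case inX psi_surj labels_match psi_glued).
apply: iso_closed_BG (gc_iso gcC) _ _ _; first exact: quot_rel_sum_edgeless.
  exact: map_split_case_l.
exact: map_split_case_r.
Qed.

Lemma gc_bM20 : C (bM 2 0). Proof. exact (gc_inv gcC (gc_bM02 gcC)). Qed.

Lemma gc_bId p : C (bId p).
Proof.
elim: p => [|p IH].
  by apply: iso_closed_BG (gc_iso gcC) _ _ _ (gc_b0 gcC); rewrite ?enum_ord0.
have enum1 : enum 'I_1 = [:: ord0] by apply: (inj_map val_inj); rewrite val_enum_ord.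
rewrite -addn1; apply: iso_closed_BG (gc_iso gcC) _ _ _ (gc_tensor gcC IH (gc_bM11 gcC)).
- exact: sum_rel_edgeless.
- by rewrite enum_ord_add enum1.
- by rewrite enum_ord_add enum1.
Qed.

Lemma gc_relabel_outputs K Z (gz : 'I_(bn Z) -> 'I_(bn K)) b1 b3 :
  C K -> C Z -> edgeless Z -> all_inputs Z ->
  bout K = b1 ++ map gz (bin Z) ++ b3 ->
  C (BG (@badj K) (bin K) (b1 ++ map gz (bout Z) ++ b3)).
Proof.
move=> CK CZ noZ inZ outK.
pose X := btensor (btensor (bId (size b1)) Z) (bId (size b3)).
pose g := split_case (split_case (tnth (in_tuple b1)) gz) (tnth (in_tuple b3)).
have g_frame (s : seq 'I_(bn Z)) :
  map g (map (lshift (size b3)) (map (lshift (bn Z)) (enum 'I_(size b1)) ++ map (@rshift (size b1) _) s)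
         ++ map (@rshift (size b1 + bn Z) _) (enum 'I_(size b3))) = b1 ++ map gz s ++ b3.
  by rewrite !map_cat !map_split_case_l !map_split_case_r !map_tnth_enum catA.
have CX : C X := gc_tensor gcC (gc_tensor gcC (gc_bId _) CZ) (gc_bId _).
have noX : edgeless X by apply: edgeless_btensor => //; apply: edgeless_btensor.
have inX : all_inputs X :=
  all_inputs_btensor (all_inputs_btensor (@all_inputs_bId (size b1)) inZ) (@all_inputs_bId (size b3)).
have labels : map g (bin X) = map id (bout K) by rewrite map_id outK g_frame.
have glued_id u u' : id u = id u' -> glued K X (lshift _ u) (lshift _ u').
  by move=> ->.
have := gc_comp_edgeless CK CX noX inX (fun j => ex_intro _ j erefl) labels glued_id.
apply: iso_closed_BG (gc_iso gcC) _ _ _; [exact: quot_rel_id | exact: map_id | exact: g_frame].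
Qed.

Lemma gc_bN_unlabelled k : C (@bN k [::] [::]).
Proof.
have CN1 : C (@bN 1 [::] [::]).
  have outM02 : bout (bM 0 2) = [::] ++ map (fun _ => ord0) (bin (bM 2 0)) ++ [::] by [].
  exact: gc_relabel_outputs (gc_bM02 gcC) gc_bM20 (fun _ _ => erefl) (@all_inputs_bM 1 0) outM02.
elim: k => [|k IH]; first exact: gc_b0 gcC.
rewrite -addn1; apply: iso_closed_BG (gc_iso gcC) _ _ _ (gc_tensor gcC IH CN1) => //.
exact: sum_rel_edgeless.
Qed.

Lemma gc_drop_stutter n (r : rel 'I_n) a b s :
  C (BG r a (b ++ stutter s)) -> C (BG r a b).
Proof.
elim/last_ind: s => [|s x IH]; first by rewrite cats0.
rewrite stutter_rcons catA => C_sx; apply: IH.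
have outK : bout (BG r a ((b ++ stutter s) ++ [:: x; x]))
    = (b ++ stutter s) ++ map (fun _ => x) (bin (bM 2 0)) ++ [::] by rewrite cats0.
have := gc_relabel_outputs C_sx gc_bM20 (fun _ _ => erefl) (@all_inputs_bM 1 0) outK.
by rewrite /= cats0.
Qed.

End GraphCategory.

Lemma all_inputs_Pgt : all_inputs Pgt.
Proof. by case=> [[|[|]]]. Qed.

Lemma all_inputs_Pgt_inv : all_inputs (binv Pgt).
Proof. by case=> [[|[|]]]. Qed.

Section WithPgt.
Variable C : bgraph -> Prop.
Hypotheses (gcC : graph_category C) (CPgt : C Pgt).

Lemma gc_bM13 : C (bM 1 3).
Proof.
pose K := btensor (bM 0 2) (bM 1 1).
pose z0 : 'I_(bn K) := lshift 1 ord0.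
have glued_z0 u : glued K Pgt (lshift _ u) (lshift _ z0).
  have y_z0 : glued K Pgt (rshift _ ord_max) (lshift _ z0).
    by rewrite connect_glue_sym; apply/connect1/glue_rel_lr.
  case: (split_ordP u) => w ->; rewrite ord1; first exact: connect0.
  by apply: connect_trans y_z0; apply/connect1/glue_rel_lr.
have psi_glued u u' : (ord0 : 'I_1) = ord0 -> glued K Pgt (lshift _ u) (lshift _ u').
  by move=> _; apply: connect_trans (glued_z0 u) _; rewrite connect_glue_sym.
have surj0 : surj (fun _ : 'I_(bn K) => ord0 : 'I_1) by move=> j; exists z0; rewrite ord1.
have := gc_comp_edgeless (g := fun _ => ord0) gcC (gc_tensor gcC (gc_bM02 gcC) (gc_bM11 gcC))
  CPgt (fun _ _ => erefl) all_inputs_Pgt surj0 erefl psi_glued.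
apply: iso_closed_BG (gc_iso gcC) _ _ _ => //.
by apply: quot_rel_edgeless; apply: sum_rel_edgeless.
Qed.

Lemma gc_bM04 : C (bM 0 4).
Proof.
have outM02 : bout (bM 0 2) = [::] ++ map (fun _ => ord0) (bin (bM 1 3)) ++ [:: ord0] by [].
exact (gc_relabel_outputs gcC (gc_bM02 gcC) gc_bM13 (fun _ _ => erefl) (@all_inputs_bM 0 3) outM02).
Qed.

(* [binv Pgt] rewrites the outputs [v; v; x] as [x; v; v]. *)
Lemma gc_move_pair_last n (r : rel 'I_n) a v b1 b3 :
  C (BG r a (b1 ++ [:: v; v] ++ b3)) -> C (BG r a (b1 ++ b3 ++ [:: v; v])).
Proof.
elim: b3 b1 => [|x b3 IH] b1 C_b; first by rewrite cats0 in C_b.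
pose gz (z : 'I_2) : 'I_n := if z == ord0 then x else v.
have outK : bout (BG r a (b1 ++ [:: v; v] ++ x :: b3))
    = b1 ++ map gz (bin (binv Pgt)) ++ b3 by [].
have := gc_relabel_outputs gcC C_b (gc_inv gcC CPgt) (fun _ _ => erefl) all_inputs_Pgt_inv outK.
by move=> C_x; have := IH (rcons b1 x); rewrite -cats1 -!catA; apply; exact C_x.
Qed.

Lemma gc_double_output G v : C G -> v \in bout G -> C (add_out_pair v).
Proof.
move=> CG v_out; have [b1 [b3 outG]] : exists b1 b3, bout G = b1 ++ v :: b3.
  by case/splitPr: v_out => b1 b3; exists b1, b3.
have outK : bout G = b1 ++ map (fun _ => v) (bin (bM 1 3)) ++ b3 by rewrite outG.
have := gc_relabel_outputs gcC CG gc_bM13 (fun _ _ => erefl) (@all_inputs_bM 0 3) outK.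
rewrite /add_out_pair outG => C_v3; have := @gc_move_pair_last _ _ _ v (rcons b1 v) b3.
by rewrite -cats1 -!catA; apply; exact C_v3.
Qed.

Lemma gc_bM40 : C (bM 4 0). Proof. exact (gc_inv gcC gc_bM04). Qed.

(* Glue the outputs of (add_out_pair v) (x) Id_2 to those of Id (x) M^{4,0}: the cap identifies
   v with both new vertices, whose two inputs survive as an input pair at v. *)
Lemma gc_out_pair_to_in G v : C (add_out_pair v) -> C (@add_in_pair G v).
Proof.
move=> C_out.
have enum2 : enum 'I_2 = [:: ord0; ord_max] by apply: (inj_map val_inj); rewrite val_enum_ord.
pose K := btensor (add_out_pair v) (bId 2).
pose X := btensor (bId (size (bout G))) (bM 4 0).
pose psi := split_case id (fun _ : 'I_2 => v).
pose g := split_case (tnth (in_tuple (bout G))) (fun _ : 'I_1 => v).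
pose y : 'I_(bn X) := rshift _ ord0.
have outK : bout K = map (lshift 2) (bout G)
                     ++ [:: lshift 2 v; lshift 2 v; rshift (bn G) ord0; rshift (bn G) ord_max].
  by rewrite [bout K]/= map_cat -catA enum2.
have inX : bin X = map (lshift 1) (enum 'I_(size (bout G))) ++ nseq 4 y by [].
have glued_y x : x \in [:: lshift 2 v; rshift (bn G) ord0; rshift (bn G) ord_max] ->
    glued K X (lshift _ x) (rshift _ y).
  move=> x_in; apply/connect1/glue_rel_lr; rewrite outK inX.
  apply: mem_zip_catr; first by rewrite !size_map -enumT size_enum_ord.
  by apply: mem_zip_nseq; rewrite in_cons x_in orbT.
have glued_psi x : glued K X (lshift _ x) (lshift _ (lshift _ (psi x))).
  case: (split_ordP x) => w ->; rewrite /psi ?split_case_l ?split_case_r //.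
  apply: connect_trans (glued_y _ _) _; first by rewrite !inE !eq_shift; case: w => [[|[|]]].
  by rewrite connect_glue_sym; apply: glued_y; rewrite mem_head.
have psi_glued u u' : psi u = psi u' -> glued K X (lshift _ u) (lshift _ u').
  by move=> e; apply: connect_trans (glued_psi u) _; rewrite e connect_glue_sym.
have psi_surj : surj psi by move=> j; exists (lshift _ j); rewrite /psi split_case_l.
have labels : map g (bin X) = map psi (bout K).
  rewrite inX outK map_cat map_split_case_l map_tnth_enum map_cat map_split_case_l map_id.
  by rewrite /= /g /psi !split_case_r !split_case_l.
have noX : edgeless X by apply: edgeless_btensor.
have allX : all_inputs X := all_inputs_btensor (@all_inputs_bId _) (@all_inputs_bM 3 0).
have := gc_comp_edgeless gcC (gc_tensor gcC C_out (gc_bId gcC 2))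
  (gc_tensor gcC (gc_bId gcC _) gc_bM40) noX allX psi_surj labels psi_glued.
apply: iso_closed_BG (gc_iso gcC) _ _ _.
- by move=> i j; rewrite quot_rel_sum_edgeless ?quot_rel_id.
- by rewrite /= map_cat map_split_case_l map_split_case_r map_id enum2.
- by rewrite /= map_cat map_split_case_l map_tnth_enum cats0.
Qed.

Lemma gc_in_pair_to_out G v : C (@add_in_pair G v) -> C (add_out_pair v).
Proof. by move=> /(gc_inv gcC) /(@gc_out_pair_to_in (binv G)) /(gc_inv gcC). Qed.

End WithPgt.

Section Pairable.
Variable C : bgraph -> Prop.
Hypotheses (gcC : graph_category C) (CPgt : C Pgt).

Definition pairable (G : bgraph) : Prop := C G /\ forall v : 'I_(bn G), C (add_out_pair v).

Lemma pairable_iso : iso_closed pairable.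
Proof.
move=> G H isoGH [CG pairG]; split; first exact (gc_iso gcC isoGH CG).
case: isoGH => f [[f' fK f'K] f_edge f_in f_out] v.
apply: (gc_iso gcC) (pairG (f' v)); exists f; split=> //; first by exists f'.
by rewrite map_cat f_out /= f'K.
Qed.

Lemma pairable_tensor K H : pairable K -> pairable H -> pairable (btensor K H).
Proof.
move=> [CK pairK] [CH pairH]; split=> [|x]; first exact (gc_tensor gcC CK CH).
case: (split_ordP x) => [u|w] ->.
  have := gc_tensor gcC (pairK u) CH; rewrite /btensor /= map_cat -catA.
  by move=> /(gc_move_pair_last gcC CPgt); rewrite /add_out_pair /= -catA.
by have := gc_tensor gcC CK (pairH w); rewrite /btensor /= map_cat catA.
Qed.

Lemma pairable_comp K H m (q : 'I_(bn K + bn H) -> 'I_m) :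
  pairable K -> pairable H -> size (bout K) = size (bin H) -> is_glue_map q ->
  pairable (bcomp q).
Proof.
move=> [CK pairK] [CH pairH] sKH glue_q; split=> [|j]; first exact (gc_comp gcC CK CH sKH glue_q).
have [x <-] := glue_q.1 j; case: (split_ordP x) => [u|w] ->.
  have C_in := gc_out_pair_to_in gcC CPgt (pairK u).
  apply: (gc_in_pair_to_out gcC CPgt); have := gc_comp gcC C_in CH sKH glue_q.
  by rewrite /bcomp /mkquot /= !map_cat.
by have := gc_comp gcC CK (pairH w) sKH glue_q; rewrite /bcomp /mkquot /= !map_cat.
Qed.

Lemma pairable_inv K : pairable K -> pairable (binv K).
Proof.
move=> [CK pairK]; split=> [|v]; first exact (gc_inv gcC CK).
exact (gc_inv gcC (gc_out_pair_to_in gcC CPgt (pairK v))).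
Qed.

Lemma pairable_labelled K : C K -> fully_labelled K -> pairable K.
Proof.
move=> CK K_lab; split=> // v; move: (K_lab v); rewrite mem_cat => /orP [v_in|v_out].
  apply: (gc_in_pair_to_out gcC CPgt).
  exact (gc_inv gcC (gc_double_output gcC CPgt (gc_inv gcC CK) v_in)).
exact (gc_double_output gcC CPgt CK v_out).
Qed.

Lemma gc_pairable : graph_category pairable.
Proof.
split; first exact: pairable_iso.
split; first by split=> [|v]; [exact (gc_bM11 gcC) | rewrite ord1; exact (gc_bM13 gcC CPgt)].
split; first by split=> [|v]; [exact (gc_bM02 gcC) | rewrite ord1; exact (gc_bM04 gcC CPgt)].
split; first by split=> [|[]]; first exact (gc_b0 gcC).
split; first exact: pairable_tensor.
split; first exact: pairable_comp.
exact: pairable_inv.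
Qed.

End Pairable.

Lemma gc_add_stutter C G s :
  pair_closed C -> C G -> C (BG (@badj G) (bin G) (bout G ++ stutter s)).
Proof.
case: G s => n r a b s pairC CG /=; elim/last_ind: s => [|s x IH]; first by rewrite cats0.
by rewrite stutter_rcons catA; exact (pairC (BG r a (b ++ stutter s)) x IH).
Qed.

Lemma gc_pair_closed_generated C S :
  graph_category C -> (forall K, S K -> fully_labelled K) ->
  (forall G, C G <-> generated (fun K => S K \/ K = Pgt) G) -> pair_closed C.
Proof.
move=> gcC S_lab C_gen.
have C_gens K : S K \/ K = Pgt -> C K by move=> gensK; apply/C_gen => D _; apply.
have CPgt : C Pgt by apply: C_gens; right.
move=> G v /C_gen /(_ _ (gc_pairable gcC CPgt)) pairG; apply: (pairG _).2.
move=> K gensK; apply: pairable_labelled (C_gens K gensK) _ => //.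
by case: gensK => [/S_lab //|-> [[|[|]]]].
Qed.

Lemma gc_bN_stutter_inputs C m s :
  graph_category C -> C Pgt -> pair_closed C -> C (@bN m (stutter s) [::]).
Proof.
move=> gcC CPgt pairC; elim/last_ind: s => [|s x IH]; first exact: gc_bN_unlabelled gcC m.
by rewrite stutter_rcons; exact (gc_out_pair_to_in gcC CPgt (pairC (bN (stutter s) [::]) x IH)).
Qed.

Lemma gt_of_pair_closed C : graph_category C -> C Pgt -> pair_closed C -> group_theoretical C.
Proof.
move=> gcC CPgt pairC; split=> // G m q q_surj CG.
pose K := BG (@badj G) (bin G) (bout G ++ stutter (enum 'I_(bn G))).
pose X := btensor (bId (size (bout G))) (bN (stutter (map q (enum 'I_(bn G)))) [::]).
pose g := split_case (q \o tnth (in_tuple (bout G))) id.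
have CK : C K := gc_add_stutter _ pairC CG.
have CX : C X := gc_tensor gcC (gc_bId gcC _) (gc_bN_stutter_inputs _ gcC CPgt pairC).
have noX : edgeless X by apply: edgeless_btensor.
have inX : all_inputs X.
  apply: all_inputs_btensor (@all_inputs_bId _) _ => j.
  by have [u <-] := q_surj j; rewrite mem_stutter map_f ?mem_enum.
have glued_q u : @glue_rel K X (lshift _ u) (rshift _ (rshift _ (q u))).
  apply: glue_rel_lr; rewrite [bin X]/=.
  apply: mem_zip_catr; first by rewrite size_map size_enum_ord.
  rewrite map_stutter -map_comp zip_stutter mem_stutter.
  by apply: mem_zip_graph; rewrite mem_enum.
have q_glued u u' : q u = q u' -> glued K X (lshift _ u) (lshift _ u').
  move=> e; apply: connect_trans (connect1 (glued_q u)) _.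
  by rewrite e connect_glue_sym; apply/connect1.
have labels : map g (bin X) = map q (bout K).
  by rewrite /= !map_cat map_split_case_l map_split_case_r map_comp map_tnth_enum map_id map_stutter.
have := gc_comp_edgeless gcC CK CX noX inX q_surj labels q_glued.
apply: iso_closed_BG (gc_iso gcC) _ _ _ => //.
by rewrite /= map_cat map_split_case_l map_comp map_tnth_enum cats0.
Qed.

Lemma gt_pair_closed C : group_theoretical C -> pair_closed C.
Proof.
case=> gcC quotC G v CG.
pose q := split_case id (fun _ : 'I_1 => v).
have q_surj : surj q by move=> j; exists (lshift _ j); rewrite /q split_case_l.
have := quotC (btensor G (bM 0 2)) _ q q_surj (gc_tensor gcC CG (gc_bM02 gcC)).
apply: iso_closed_BG (gc_iso gcC) _ _ _.
- by move=> i j; rewrite quot_rel_sum_edgeless ?quot_rel_id.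
- by rewrite /= map_cat map_split_case_l map_id cats0.
- by rewrite /= map_cat map_split_case_l map_id /= /q !split_case_r.
Qed.

Lemma gt_Pgt C : group_theoretical C -> C Pgt.
Proof.
case=> gcC quotC.
pose T := btensor (btensor (bM 0 2) (bM 1 1)) (bM 2 0).
pose q (i : 'I_(bn T)) : 'I_2 := if val i == 1 then ord0 else ord_max.
have q_surj : surj q.
  case=> [[|[|//]] j_lt]; [exists (Ordinal (isT : 1 < 3)) | exists (Ordinal (isT : 0 < 3))].
    exact: val_inj.
  exact: val_inj.
have := quotC T _ q q_surj (gc_tensor gcC (gc_tensor gcC (gc_bM02 gcC) (gc_bM11 gcC)) (gc_bM20 gcC)).
apply: iso_closed_BG (gc_iso gcC) _ _ _ => //.
by apply: quot_rel_edgeless; do 2 apply: sum_rel_edgeless => //.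
Qed.

Lemma gt_generated C : group_theoretical C ->
  forall G, C G <-> generated (fun K => (C K /\ fully_labelled K) \/ K = Pgt) G.
Proof.
move=> gtC G; have gcC := gtC.1; split=> [CG D gcD D_gens | /(_ C gcC)].
  case: G CG => n r a b CG; apply: (gc_drop_stutter (s := enum 'I_n) gcD).
  apply: D_gens; left; split; first exact (gc_add_stutter _ (gt_pair_closed gtC) CG).
  by move=> v; rewrite !mem_cat mem_stutter mem_enum !orbT.
by apply=> K [[] | ->] //; exact: gt_Pgt.
Qed.

Theorem proposition2p33 (C : bgraph -> Prop) :
  graph_category C ->
  (group_theoretical C <->
   exists S : bgraph -> Prop,
     (forall K, S K -> forall v : 'I_(bn K), v \in bin K ++ bout K) /\
     (forall G, C G <-> generated (fun K => S K \/ K = Pgt) G)).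
Proof.
move=> gcC; split=> [gtC | [S [S_lab C_gen]]].
  by exists (fun K => C K /\ fully_labelled K); split=> [K [] | ]; last exact: gt_generated.
apply: gt_of_pair_closed gcC _ (gc_pair_closed_generated gcC S_lab C_gen).
by apply/C_gen => D _; apply; right.
Qed.
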